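(* Let $\Gamma=A\ast B$ with $A,B$ non-trivial, let $\varepsilon>0$ and let $(G,d)$ be a group with a bi-invariant metric without $\varepsilon$-small subgroups. Let $\mu_A:A\to G$, $\mu_B:B\to G$ be bounded alternating maps with $\delta:=\max\{\|\mu_A\|_\infty,\|\mu_B\|_\infty\}\leq\varepsilon/2$. Then the split quasi-representation $\mu=\mu_A\ast\mu_B:\Gamma\to G$ satisfies $D(\mu)\geq\delta$.
   Context: $G$ has no $\varepsilon$-small subgroups if the open $\varepsilon$-ball around the identity $e$ contains no non-trivial subgroup. For maps $f_1,f_2:X\to G$, $d(f_1,f_2)=\sup_x d(f_1(x),f_2(x))$, and $\|f\|_\infty=d(f,e)$ (distance to the constant map $e$); $f$ is bounded if this is finite. Alternating means $\mu(x^{-1})=\mu(x)^{-1}$. Each $1\neq g\in A\ast B$ has a unique normal form $g=a_1b_1\cdots a_nb_n$ ($a_i\in A$, $b_i\in B$, all non-trivial except possibly $a_1$ or $b_n$), and $(\mu_A\ast\mu_B)(1)=e$, $(\mu_A\ast\mu_B)(a_1b_1\cdots a_nb_n)=\mu_A(a_1)\mu_B(b_1)\cdots\mu_A(a_n)\mu_B(b_n)$. $D(\mu)=\inf\{d(\mu,\rho):\rho\in\mathrm{Hom}(\Gamma,G)\}$. *)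

From HB Require Import structures.
From mathcomp Require Import all_boot all_order all_algebra.
From mathcomp Require Import boolp classical_sets reals constructive_ereal ereal.
Set Implicit Arguments. Unset Strict Implicit. Unset Printing Implicit Defensive.
Import Order.TTheory GRing.Theory Num.Theory.
Local Open Scope classical_set_scope.
Local Open Scope ring_scope.

Record group := Group {
  gcar :> Type;
  gmul : gcar -> gcar -> gcar;
  ginv : gcar -> gcar;
  gone : gcar;
  gmulA : forall x y z, gmul x (gmul y z) = gmul (gmul x y) z;
  gmul1 : forall x, gmul gone x = x;
  gmulV : forall x, gmul (ginv x) x = gone }.

Arguments gmul {g}. Arguments ginv {g}. Arguments gone {g}.

Definition nontrivial (A : group) : Prop := exists a : A, a <> gone.

Definition bi_invariant_metric (R : realType) (G : group) (d : G -> G -> R) : Prop :=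
  (forall x y, d x y = 0 <-> x = y) /\
  (forall x y, d x y = d y x) /\
  (forall x y z, d x z <= d x y + d y z) /\
  (forall g x y, d (gmul g x) (gmul g y) = d x y) /\
  (forall g x y, d (gmul x g) (gmul y g) = d x y).

Definition is_subgroup (G : group) (H : set G) : Prop :=
  H gone /\ (forall x y, H x -> H y -> H (gmul x y)) /\ (forall x, H x -> H (ginv x)).

Definition no_small_subgroups (R : realType) (G : group) (d : G -> G -> R) (eps : R) : Prop :=
  forall H : set G, is_subgroup H -> (forall h, H h -> d h gone < eps) -> H = [set gone].

Definition alternating (X G : group) (f : X -> G) : Prop :=
  forall x, f (ginv x) = ginv (f x).

Definition supdist (R : realType) (X : Type) (D : set X) (G : group) (d : G -> G -> R)
  (f1 f2 : X -> G) : \bar R :=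
  ereal_sup [set (d (f1 x) (f2 x))%:E | x in D].

Definition supnorm (R : realType) (X : Type) (G : group) (d : G -> G -> R) (f : X -> G) : \bar R :=
  supdist setT d f (fun _ => gone).

(** The free product A * B, realised as reduced words. *)
Section FreeProduct.
Variables A B : group.
Definition letter := (A + B)%type.

Definition nontriv_letter (x : letter) : Prop :=
  match x with inl a => a <> gone | inr b => b <> gone end.

Definition same_factor (x y : letter) : Prop :=
  match x, y with inl _, inl _ => True | inr _, inr _ => True | _, _ => False end.

Fixpoint reduced (w : seq letter) : Prop :=
  match w with
  | [::] => True
  | x :: w' => nontriv_letter x /\
      (match w' with [::] => True | y :: _ => ~ same_factor x y end) /\ reduced w'
  end.

Definition push (x : letter) (w : seq letter) : seq letter :=
  match x with
  | inl a =>
      match w with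
      | inl a' :: w' => if pselect (gmul a a' = gone) then w' else inl (gmul a a') :: w'
      | _ => if pselect (a = gone) then w else inl a :: w
      end
  | inr b =>
      match w with
      | inr b' :: w' => if pselect (gmul b b' = gone) then w' else inr (gmul b b') :: w'
      | _ => if pselect (b = gone) then w else inr b :: w
      end
  end.

Definition wmul (w1 w2 : seq letter) : seq letter := foldr push w2 w1.

Definition is_hom (G : group) (rho : seq letter -> G) : Prop :=
  forall w1 w2, reduced w1 -> reduced w2 -> rho (wmul w1 w2) = gmul (rho w1) (rho w2).

Definition split_map (G : group) (muA : A -> G) (muB : B -> G) (w : seq letter) : G :=
  foldr (fun x acc => gmul (match x with inl a => muA a | inr b => muB b end) acc) gone w.

Definition Dist (R : realType) (G : group) (d : G -> G -> R) (mu : seq letter -> G) : \bar R :=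
  ereal_inf [set supdist reduced d mu rho | rho in is_hom (G:=G)].
End FreeProduct.

(** Suppose a homomorphism [rho] is at distance [r < delta <= eps/2] from [mu].
    Restricted to the factor [A], [rho] is a homomorphism whose image stays
    within [r + eps/2 < eps] of the identity, so it is trivial by the absence of
    small subgroups; hence [d (muA a) e <= r] for [a <> e].  At [a = e],
    alternation makes [{e, muA e}] a small subgroup, so [muA e = e].  Thus
    [||muA|| <= r], likewise [||muB|| <= r], contradicting [r < delta]. *)
From mathcomp Require Import all_boot all_order all_algebra.
From mathcomp Require Import boolp classical_sets reals constructive_ereal ereal.
Set Implicit Arguments. Unset Strict Implicit.
Import Order.TTheory GRing.Theory Num.Theory.
Local Open Scope classical_set_scope.
Local Open Scope ring_scope.

Section GroupTheory.
Variable G : group.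
Implicit Types x y z : G.

Lemma gmulVr x : gmul x (ginv x) = gone.
Proof.
have -> : gmul x (ginv x) = gmul (gmul (ginv (ginv x)) (ginv x)) (gmul x (ginv x))
  by rewrite gmulV gmul1.
by rewrite -gmulA (gmulA (ginv x) x) gmulV gmul1 gmulV.
Qed.

Lemma gmulr1 x : gmul x gone = x.
Proof. by rewrite -(gmulV x) gmulA gmulVr gmul1. Qed.

Lemma gmulI x y z : gmul x y = gmul x z -> y = z.
Proof. by move=> h; rewrite -(gmul1 y) -(gmul1 z) -(gmulV x) -!gmulA h. Qed.

Lemma gmul_idem_eq1 x : gmul x x = x -> x = gone.
Proof. by rewrite -{3}(gmulr1 x) => /gmulI. Qed.

Lemma ginv1 : ginv (gone : G) = gone.
Proof. by rewrite -{2}(gmulV gone) gmulr1. Qed.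

Lemma involution_subgroup x : ginv x = x -> is_subgroup [set z | z = gone \/ z = x].
Proof.
move=> xV; split; first by left.
split; last by move=> z [->|->]; [left; rewrite ginv1 | right].
move=> y z [->|->] [->|->].
- by left; rewrite gmul1.
- by right; rewrite gmul1.
- by right; rewrite gmulr1.
- by left; rewrite -[X in gmul X _]xV gmulV.
Qed.
End GroupTheory.

Section Homomorphisms.
Variables (X G : group) (h : X -> G).
Hypothesis hh : forall a b, h (gmul a b) = gmul (h a) (h b).

Lemma hom1 : h gone = gone.
Proof. by apply: gmul_idem_eq1; rewrite -hh gmul1. Qed.

Lemma homV a : h (ginv a) = ginv (h a).
Proof. by apply: (@gmulI _ (h a)); rewrite gmulVr -hh gmulVr hom1. Qed.

Lemma range_hom_subgroup : is_subgroup (range h).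
Proof.
split; first by exists gone => //; exact: hom1.
split; first by move=> _ _ [a _ <-] [b _ <-]; exists (gmul a b).
by move=> _ [a _ <-]; exists (ginv a) => //; exact: homV.
Qed.
End Homomorphisms.

Section BiInvariantMetric.
Variables (R : realType) (G : group) (d : G -> G -> R).
Hypothesis hd : bi_invariant_metric d.

Lemma metricxx x : d x x = 0.
Proof. by apply/hd.1. Qed.

Lemma metric_ge0 x y : 0 <= d x y.
Proof.
have := hd.2.2.1 x y x; rewrite metricxx hd.2.1 => h.
by rewrite -(@pmulr_rge0 _ 2) // mulr2n mulrDl !mul1r.
Qed.

Variable eps : R.
Hypothesis hns : no_small_subgroups d eps.

Lemma small_hom_trivial (X : group) (h : X -> G) :
  (forall x y, h (gmul x y) = gmul (h x) (h y)) ->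
  (forall x, d (h x) gone < eps) -> forall x, h x = gone.
Proof.
move=> hh hsmall x.
have range1 : range h = [set gone].
  by apply: (hns (range_hom_subgroup hh)) => _ [y _ <-].
have : range h (h x) by exists x.
by rewrite range1.
Qed.

Lemma small_involution_trivial x : ginv x = x -> d x gone < eps -> x = gone.
Proof.
move=> xV xsmall.
have pair1 : [set z | z = gone \/ z = x] = [set gone].
  apply: (hns (involution_subgroup xV)) => z [->|->] //.
  by rewrite metricxx; apply: le_lt_trans (metric_ge0 x gone) xsmall.
have : [set z | z = gone \/ z = x] x by right.
by rewrite pair1.
Qed.

Lemma supnorm_le_of_close_hom (X : group) (f h : X -> G) (r : R) :
  0 < eps -> alternating f -> (forall x y, h (gmul x y) = gmul (h x) (h y)) ->
  (supnorm d f <= (eps / 2)%:E)%E ->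
  0 <= r -> r < eps / 2 -> (forall x, x <> gone -> d (f x) (h x) <= r) ->
  (supnorm d f <= r%:E)%E.
Proof.
move=> eps0 falt hh fsup r0 reps hr.
have fbound x : d (f x) gone <= eps / 2.
  by rewrite -lee_fin; apply: le_trans fsup; apply: ereal_sup_ubound; exists x.
have h1 : forall x, h x = gone.
  apply: small_hom_trivial => // x.
  have [->|xn] := pselect (x = gone); first by rewrite (hom1 hh) metricxx.
  apply: le_lt_trans (hd.2.2.1 _ (f x) _) _; rewrite hd.2.1.
  apply: (@le_lt_trans _ _ (r + eps / 2)); first exact: lerD (hr _ xn) (fbound x).
  by rewrite [X in _ < X](splitr eps) ltrD2r.
have f1 : f gone = gone.
  apply: small_involution_trivial; first by rewrite -falt ginv1.
  by apply: le_lt_trans (fbound _) _; rewrite ltr_pdivrMr // ltr_pMr // ltr1n.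
apply/ereal_supP => _ [x _ <-]; rewrite lee_fin.
have [->|xn] := pselect (x = gone); first by rewrite f1 metricxx.
by rewrite -(h1 x); exact: hr.
Qed.
End BiInvariantMetric.

Section FreeProductFactors.
Variables (A B G : group).

Definition embl (a : A) : seq (letter A B) :=
  if pselect (a = gone) then [::] else [:: inl a].
Definition embr (b : B) : seq (letter A B) :=
  if pselect (b = gone) then [::] else [:: inr b].

Lemma reduced_embl a : reduced (embl a).
Proof. by rewrite /embl; case: pselect. Qed.

Lemma reduced_embr b : reduced (embr b).
Proof. by rewrite /embr; case: pselect. Qed.

Lemma wmul_embl (x y : A) : wmul (embl x) (embl y) = embl (gmul x y).
Proof.
rewrite /embl; case: (pselect (x = gone)) => [x1|xn]; first by subst x; rewrite gmul1.
by case: (pselect (y = gone)) => [y1|yn]; first by subst y; rewrite gmulr1.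
Qed.

Lemma wmul_embr (x y : B) : wmul (embr x) (embr y) = embr (gmul x y).
Proof.
rewrite /embr; case: (pselect (x = gone)) => [x1|xn]; first by subst x; rewrite gmul1.
by case: (pselect (y = gone)) => [y1|yn]; first by subst y; rewrite gmulr1.
Qed.

Variables (muA : A -> G) (muB : B -> G).

Lemma split_map_embl a : a <> gone -> split_map muA muB (embl a) = muA a.
Proof. by move=> an; rewrite /embl; case: pselect => //= _; rewrite gmulr1. Qed.

Lemma split_map_embr b : b <> gone -> split_map muA muB (embr b) = muB b.
Proof. by move=> bn; rewrite /embr; case: pselect => //= _; rewrite gmulr1. Qed.
End FreeProductFactors.

Theorem theorem4p2 (R : realType) (A B G : group) (d : G -> G -> R) (eps : R)
  (muA : A -> G) (muB : B -> G) :
  nontrivial A -> nontrivial B -> 0 < eps ->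
  bi_invariant_metric d -> no_small_subgroups d eps ->
  alternating muA -> alternating muB ->
  (supnorm d muA < +oo)%E -> (supnorm d muB < +oo)%E ->
  (maxe (supnorm d muA) (supnorm d muB) <= (eps / 2)%:E)%E ->
  (maxe (supnorm d muA) (supnorm d muB) <= Dist d (split_map muA muB))%E.
Proof.
move=> _ _ eps0 hd hns haA haB _ _ hmax.
apply/ereal_infP => _ [rho hrho <-].
set S := supdist _ _ _ _.
have [Slt|] := boolP (S < maxe (supnorm d muA) (supnorm d muB))%E; last by rewrite -leNgt.
have S0 : (0 <= S)%E.
  apply: le_trans (ereal_sup_ubound _); last by exists [::].
  by rewrite lee_fin metric_ge0.
have Sfin : S \is a fin_num by rewrite ge0_fin_numE // (lt_le_trans Slt) // leey.
have Seps : fine S < eps / 2 by rewrite -lte_fin fineK // (lt_le_trans Slt).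
have Sr w : reduced w -> d (split_map muA muB w) (rho w) <= fine S.
  by move=> hw; rewrite -lee_fin fineK //; apply: ereal_sup_ubound; exists w.
have Sge0 : 0 <= fine S by rewrite -lee_fin fineK.
move: hmax; rewrite -(fineK Sfin) !ge_max => /andP[hA hB]; apply/andP; split.
- apply: (supnorm_le_of_close_hom (h := fun a => rho (embl B a)) hd hns eps0 haA _ hA
    Sge0 Seps).
  + by move=> a a'; rewrite -wmul_embl hrho //; exact: reduced_embl.
  + by move=> a an; rewrite -(split_map_embl muA muB an); apply/Sr/reduced_embl.
- apply: (supnorm_le_of_close_hom (h := fun b => rho (embr A b)) hd hns eps0 haB _ hB
    Sge0 Seps).
  + by move=> b b'; rewrite -wmul_embr hrho //; exact: reduced_embr.
  + by move=> b bn; rewrite -(split_map_embr muA muB bn); apply/Sr/reduced_embr.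
Qed.
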